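(* Let $D=(V,A)$ be a digraph with minimum dicut size $\tau$ and let $k\ge 2$ be rational. If the underlying undirected graph $G$ of $D$ admits a nowhere-zero circular $k$-flow, then the digraph $\vec G=(V,A\cup A^{-1})$ with weight $w^D$ can pack two $\lfloor\tau/k\rfloor$-SCD's; i.e., there exist integral vectors $x^1,x^2\in\mathbb{Z}_{\ge0}^{A\cup A^{-1}}$ with $x^1+x^2\le w^D$ (in fact one may take $x^1+x^2=w^D$) such that $x^i(\delta^+_{\vec G}(U))\ge\lfloor\tau/k\rfloor$ for $i=1,2$ and all $\emptyset\neq U\subsetneq V$.
   Context: Digraphs/graphs are finite and loopless; parallel arcs/edges allowed. For $\emptyset\neq U\subsetneq V$, $\delta^+(U)$ / $\delta^-(U)$ denote arcs leaving/entering $U$. A dicut of $D$ is $\delta^+_D(U)$ with $\emptyset\neq U\subsetneq V$ and $\delta^-_D(U)=\emptyset$; ''$D$ has minimum dicut size $\tau$'' means $D$ has at least one dicut and the minimum number of arcs in a dicut is $\tau$. The underlying undirected graph replaces each arc $(u,v)$ by an edge $\{u,v\}$. $A^{-1}$ denotes the set of reverses $a^{-1}$ of arcs $a\in A$; $\vec G$ has vertex set $V$ and arc set $A\cup A^{-1}$, with weight $w^D_a=\tau$ for $a\in A$ and $w^D_{a^{-1}}=1$. For a positive integer $t$, a $t$-SCD ($t$-strongly-connected digraph) of $\vec G$ is a vector $x\in\mathbb{Z}_{\ge0}^{A\cup A^{-1}}$ with $x(\delta^+_{\vec G}(U))\ge t$ for all $\emptyset\neq U\subsetneq V$, where $x(B)=\sum_{e\in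 B}x_e$. For rational $k\ge2$, a nowhere-zero circular $k$-flow of an undirected graph $G$ is a pair $(E^+,f)$ with $E^+$ an orientation of $G$ and $f:E^+\to[1,k-1]$ real-valued satisfying flow conservation at every vertex. *)

From HB Require Import structures.
From mathcomp Require Import all_boot all_order all_algebra.
From Stdlib Require Rdefinitions.
From mathcomp Require Import Rstruct.
Set Implicit Arguments. Unset Strict Implicit. Unset Printing Implicit Defensive.
Import Order.TTheory GRing.Theory Num.Theory.

(* A digraph D = (V, A): vertex finType V, arc finType E (parallel arcs allowed),
   each arc e goes from tl e to hd e; loopless means tl e != hd e. *)
Definition loopless (V E : finType) (tl hd : E -> V) : Prop :=
  forall e, tl e != hd e.

Definition delta_out (V E : finType) (tl hd : E -> V) (U : {set V}) : {set E} :=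
  [set e | (tl e \in U) && (hd e \notin U)].
Definition delta_in (V E : finType) (tl hd : E -> V) (U : {set V}) : {set E} :=
  [set e | (tl e \notin U) && (hd e \in U)].

Definition dicut_shore (V E : finType) (tl hd : E -> V) (U : {set V}) : Prop :=
  U != set0 /\ U != setT /\ delta_in tl hd U = set0.

Definition min_dicut_size (V E : finType) (tl hd : E -> V) (tau : nat) : Prop :=
  (exists U, dicut_shore tl hd U /\ #|delta_out tl hd U| = tau) /\
  (forall U, dicut_shore tl hd U -> tau <= #|delta_out tl hd U|).

(* Nowhere-zero circular k-flow of the underlying undirected graph G:
   edges of G are the elements of E with endpoints {tl e, hd e};
   an orientation E^+ is given by o : E -> bool (o e = true : oriented tl e -> hd e,
   o e = false : oriented hd e -> tl e); f : E -> R takes values in [1, k-1]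
   and satisfies flow conservation at every vertex. *)
Definition or_tail (V E : finType) (tl hd : E -> V) (o : E -> bool) (e : E) : V :=
  if o e then tl e else hd e.
Definition or_head (V E : finType) (tl hd : E -> V) (o : E -> bool) (e : E) : V :=
  if o e then hd e else tl e.

Definition nz_circular_flow (V E : finType) (tl hd : E -> V) (k : rat)
    (o : E -> bool) (f : E -> Rdefinitions.R) : Prop :=
  (forall e, (1 <= f e)%R /\ (f e <= ratr k - 1)%R) /\
  (forall v : V, (\sum_(e | or_head tl hd o e == v) f e
                  = \sum_(e | or_tail tl hd o e == v) f e)%R).

Definition has_nz_circular_flow (V E : finType) (tl hd : E -> V) (k : rat) : Prop :=
  exists (o : E -> bool) (f : E -> Rdefinitions.R), nz_circular_flow tl hd k o f.

(* The digraph vec G = (V, A u A^{-1}): its arcs are (E + E), inl e = the arc e,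
   inr e = its reverse e^{-1} (going from hd e to tl e). *)
Definition sym_tl (V E : finType) (tl hd : E -> V) (a : E + E) : V :=
  match a with inl e => tl e | inr e => hd e end.
Definition sym_hd (V E : finType) (tl hd : E -> V) (a : E + E) : V :=
  match a with inl e => hd e | inr e => tl e end.

Definition wD (E : finType) (tau : nat) (a : E + E) : nat :=
  match a with inl _ => tau | inr _ => 1 end.

Definition sym_delta_out (V E : finType) (tl hd : E -> V) (U : {set V}) : {set E + E} :=
  [set a | (sym_tl tl hd a \in U) && (sym_hd tl hd a \notin U)].

Definition is_SCD (V E : finType) (tl hd : E -> V) (t : int) (x : {ffun E + E -> nat}) : Prop :=
  forall U : {set V}, U != set0 -> U != setT ->
    (t <= (\sum_(a in sym_delta_out tl hd U) x a)%:Z)%R.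

From HB Require Import structures.
From mathcomp Require Import all_boot all_order all_algebra.
From Stdlib Require Rdefinitions.
From mathcomp Require Import Rstruct.
From mathcomp Require Import zify lra.
Import Order.TTheory GRing.Theory Num.Theory.

(* Give every arc of A the weight floor(tau/2) in both vectors, and split the
   reverse arcs of A^{-1} between them according to the orientation of a
   nowhere-zero circular k-flow.  A cut of vec G that some arc of A leaves
   already carries floor(tau/2) >= floor(tau/k).  Otherwise no arc of A leaves U,
   the arcs entering U form a dicut with at least tau arcs, and their reverses
   leave U.  The flow crosses this cut with zero net value and takes values in
   [1, k-1], so at least a 1/k fraction of its arcs is oriented into U and at
   least a 1/k fraction out of U. *)

Local Notation R := Rdefinitions.R.

Lemma sum_fibers_in {I J : finType} (h : I -> J) (U : {set J}) (F : I -> R) :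
  (\sum_(j in U) \sum_(i | h i == j) F i = \sum_(i | h i \in U) F i)%R.
Proof.
symmetry; rewrite (partition_big h (mem U)) //=.
apply: eq_bigr => j jU; apply: eq_bigl => i.
by case: eqP => [->|]; rewrite ?jU ?andbF.
Qed.

Lemma card_le_of_balanced_sum (I : finType) (A B : {set I}) (f : I -> R) (c : R) :
  (forall i, i \in A -> f i <= c)%R -> (forall i, i \in B -> 1 <= f i)%R ->
  (\sum_(i in A) f i = \sum_(i in B) f i)%R ->
  (#|B|%:R <= c * #|A|%:R)%R.
Proof.
move=> fA fB eqAB.
have sumB : (#|B|%:R <= \sum_(i in B) f i)%R.
  by rewrite -sum1_card natr_sum ler_sum.
have sumA : (\sum_(i in A) f i <= c * #|A|%:R)%R.
  by rewrite mulr_natr -sumr_const ler_sum.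
by rewrite (le_trans sumB) // -eqAB.
Qed.

Definition no_arc_leaves {V E : finType} (tl hd : E -> V) (U : {set V}) : Prop :=
  forall e, tl e \in U -> hd e \in U.

Section CircularFlows.

Context {V E : finType} {tl hd : E -> V}.

Lemma nz_circular_flow_reverse {k : rat} {o : E -> bool} {f : E -> R} :
  nz_circular_flow tl hd k o f -> nz_circular_flow tl hd k (fun e => ~~ o e) f.
Proof.
move=> [bounds conservation]; split=> // v.
rewrite /or_head /or_tail /= in conservation *.
under eq_bigl do rewrite if_neg.
under [RHS]eq_bigl do rewrite if_neg.
by rewrite conservation.
Qed.

Lemma flow_in_eq_flow_out (o : E -> bool) (f : E -> R) (U : {set V}) :
  (forall v : V, \sum_(e | or_head tl hd o e == v) f e
                 = \sum_(e | or_tail tl hd o e == v) f e)%R ->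
  (\sum_(e | (or_head tl hd o e \in U) && (or_tail tl hd o e \notin U)) f e
   = \sum_(e | (or_tail tl hd o e \in U) && (or_head tl hd o e \notin U)) f e)%R.
Proof.
move=> conservation.
have : (\sum_(e | or_head tl hd o e \in U) f e
        = \sum_(e | or_tail tl hd o e \in U) f e)%R.
  rewrite -(sum_fibers_in (or_head tl hd o)) -(sum_fibers_in (or_tail tl hd o)).
  exact: eq_bigr.
rewrite (bigID (fun e => or_tail tl hd o e \in U)) /=.
rewrite [RHS](bigID (fun e => or_head tl hd o e \in U)) /=.
rewrite [in RHS](eq_bigl (fun e => (or_head tl hd o e \in U)
                                   && (or_tail tl hd o e \in U))) => [|e].
  by move/addrI.
by rewrite andbC.
Qed.

Lemma flow_balance_delta_in {k : rat} {o : E -> bool} {f : E -> R} {U : {set V}} :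
  nz_circular_flow tl hd k o f -> no_arc_leaves tl hd U ->
  (\sum_(e in delta_in tl hd U :&: [set e | o e]) f e
   = \sum_(e in delta_in tl hd U :\: [set e | o e]) f e)%R.
Proof.
move=> [_ conservation] closedU.
have entering e : (e \in delta_in tl hd U :&: [set e | o e])
    = (or_head tl hd o e \in U) && (or_tail tl hd o e \notin U).
  rewrite !inE /or_head /or_tail; move: (closedU e).
  by case: (o e); case: (tl e \in U); case: (hd e \in U) => // /(_ isT).
have leaving e : (e \in delta_in tl hd U :\: [set e | o e])
    = (or_tail tl hd o e \in U) && (or_head tl hd o e \notin U).
  rewrite !inE /or_head /or_tail; move: (closedU e).
  by case: (o e); case: (tl e \in U); case: (hd e \in U) => // /(_ isT).
rewrite (eq_bigl _ _ entering) (eq_bigl _ _ leaving).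
exact: flow_in_eq_flow_out.
Qed.

Lemma min_dicut_le_card_delta_in {tau : nat} {U : {set V}} :
  min_dicut_size tl hd tau -> U != set0 -> U != setT -> no_arc_leaves tl hd U ->
  tau <= #|delta_in tl hd U|.
Proof.
move=> [_ min_dicut] U0 UT closedU.
have -> : delta_in tl hd U = delta_out tl hd (~: U).
  by apply/setP => e; rewrite !inE negbK andbC.
apply: min_dicut; split; [|split].
- by rewrite -setCT (inj_eq (@setC_inj _)).
- by rewrite -setC0 (inj_eq (@setC_inj _)).
- apply/setP => e; rewrite !inE negbK; apply/negbTE/andP => -[tlU hdNU].
  by rewrite (closedU e tlU) in hdNU.
Qed.

Lemma card_oriented_delta_in_lower_bound {k : rat} {tau : nat} {o : E -> bool}
    {f : E -> R} {U : {set V}} :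
  nz_circular_flow tl hd k o f -> (0 < k)%R -> no_arc_leaves tl hd U ->
  tau <= #|delta_in tl hd U| ->
  (tau%:R / k <= #|delta_in tl hd U :&: [set e | o e]|%:R)%R.
Proof.
move=> flow k_gt0 closedU tau_le.
have [bounds _] := flow.
set A := delta_in tl hd U :&: _.
have cardB : (#|delta_in tl hd U :\: [set e | o e]|%:R <= (ratr k - 1) * #|A|%:R :> R)%R.
  apply: card_le_of_balanced_sum (flow_balance_delta_in flow closedU) => e _.
    exact: (bounds e).2.
  exact: (bounds e).1.
have cardAB : (tau%:R <= #|A|%:R + #|delta_in tl hd U :\: [set e | o e]|%:R :> R)%R.
  by rewrite -natrD ler_nat cardsID.
have : (tau%:R <= ratr k * #|A|%:R :> R)%R by lra.
by rewrite ler_pdivrMr // mulrC -(ler_rat R) rmorphM /= !ratr_nat.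
Qed.

Definition halved_weight (tau : nat) (b : E -> bool) : {ffun E + E -> nat} :=
  [ffun a => match a with inl _ => tau./2 | inr e => b e end].

Lemma halved_weight_pack (tau : nat) (b : E -> bool) (a : E + E) :
  halved_weight tau b a + halved_weight tau (fun e => ~~ b e) a <= wD tau a.
Proof. by case: a => [e|e]; rewrite !ffunE /=; [lia | case: (b e)]. Qed.

Lemma is_SCD_halved_weight {t : int} {tau : nat} {b : E -> bool} :
  (t <= (tau./2)%:Z)%R ->
  (forall U : {set V}, U != set0 -> U != setT -> no_arc_leaves tl hd U ->
     (t <= #|delta_in tl hd U :&: [set e | b e]|%:Z)%R) ->
  is_SCD tl hd t (halved_weight tau b).
Proof.
move=> t_le_half cut_bound U U0 UT; rewrite big_sumType /=.
case: (boolP [exists e, (tl e \in U) && (hd e \notin U)]) => [/existsP[e leaving] | ].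
  apply: (le_trans t_le_half); rewrite lez_nat (leq_trans _ (leq_addr _ _)) //.
  by rewrite (bigD1 e) ?inE //= ffunE leq_addr.
move=> /existsPn no_leaving.
have closedU : no_arc_leaves tl hd U.
  by move=> e tlU; move: (no_leaving e); rewrite tlU negbK.
apply: (le_trans (cut_bound U U0 UT closedU)).
rewrite lez_nat (leq_trans _ (leq_addl _ _)) // -sum1_card.
rewrite [leqLHS]big_mkcond [leqRHS]big_mkcond /=; apply/eq_leq/eq_bigr => e _.
by rewrite !inE ffunE /=; case: (b e); case: (tl e \in U); case: (hd e \in U).
Qed.

End CircularFlows.

Lemma floor_le_nat (F : archiRealDomainType) (x : F) (n : nat) :
  (x <= n%:R)%R -> (Num.floor x <= n%:Z)%R.
Proof. by move=> x_le; rewrite -(ler_int F) (le_trans (floor_le x)). Qed.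

Lemma floor_div_le_half (tau : nat) {k : rat} :
  (2%:R <= k)%R -> (Num.floor (tau%:R / k) <= (tau./2)%:Z)%R.
Proof.
move=> k_ge2; have k_gt0 : (0 < k)%R by apply: lt_le_trans k_ge2.
have tau_lt : (tau%:R < ((tau./2)%:Z + 1)%:~R * k :> rat)%R.
  apply: (lt_le_trans (y := ((((tau./2)%:Z + 1) * 2)%:~R)%R)).
    by rewrite pmulrn ltr_int; lia.
  by rewrite intrM ler_wpM2l // ler0z; lia.
by rewrite -ltzD1 floor_lt_int ltr_pdivrMr.
Qed.

Theorem theorem4 (V E : finType) (tl hd : E -> V) (tau : nat) (k : rat) :
  loopless tl hd ->
  min_dicut_size tl hd tau ->
  (2%:R <= k)%R ->
  has_nz_circular_flow tl hd k ->
  exists x1 x2 : {ffun E + E -> nat},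
    (forall a, x1 a + x2 a <= wD tau a) /\
    is_SCD tl hd (Num.floor (tau%:R / k)%R) x1 /\
    is_SCD tl hd (Num.floor (tau%:R / k)%R) x2.
Proof.
move=> _ min_dicut k_ge2 [o [f flow]].
have k_gt0 : (0 < k)%R by apply: lt_le_trans k_ge2.
have cut_bound b : nz_circular_flow tl hd k b f ->
    forall U : {set V}, U != set0 -> U != setT -> no_arc_leaves tl hd U ->
    (Num.floor (tau%:R / k) <= #|delta_in tl hd U :&: [set e | b e]|%:Z)%R.
  move=> flow_b U U0 UT closedU; apply: floor_le_nat.
  exact: card_oriented_delta_in_lower_bound flow_b k_gt0 closedU
           (min_dicut_le_card_delta_in min_dicut U0 UT closedU).
exists (halved_weight tau o), (halved_weight tau (fun e => ~~ o e)).
split; first exact: halved_weight_pack.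
split; apply: is_SCD_halved_weight (floor_div_le_half tau k_ge2) (cut_bound _ _).
- exact: flow.
- exact: nz_circular_flow_reverse.
Qed.
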